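(* Let $\mu$ be an Ising model on $\{-1,1\}^p$ with $\ell_1$-width at most $\gamma>0$, fix $u\in[p]$, and define $\mathcal R^*(\theta)=\mathbb E_\mu\exp\big(-\theta\sigma_u-\sigma_u\sum_{j\ne u}\theta^*_{u,j}\sigma_j\big)$ for $\theta\in\mathbb R$. Then for every $\theta\in[-\gamma,\gamma]$, \[ \mathcal R^*(\theta)-\mathcal R^*(\theta^*_u)-(\mathcal R^* )'(\theta^*_u)(\theta-\theta^*_u)\ \ge\ \frac{e^{-\gamma}}{2+2\gamma}(\theta-\theta^*_u)^2 . \]
   Context: Ising model: $\mu(\underline\sigma)\propto\exp\big(\sum_{\{u,v\}}\theta^*_{u,v}\sigma_u\sigma_v+\sum_u\theta^*_u\sigma_u\big)$ on $\{-1,1\}^p$, first sum over unordered pairs of distinct indices, symmetric couplings; $\ell_1$-width at most $\gamma$ means $\sum_{v\ne u}|\theta^*_{u,v}|+|\theta^*_u|\le\gamma$ for all $u$. *)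

From HB Require Import structures.
From mathcomp Require Import all_boot all_order all_algebra.
From mathcomp Require Import all_classical all_reals all_analysis.
Set Implicit Arguments. Unset Strict Implicit. Unset Printing Implicit Defensive.
Import Order.TTheory GRing.Theory Num.Theory.
Local Open Scope ring_scope.

Section Ising.
Variable R : realType.
Variable p : nat.

Definition config := {ffun 'I_p -> bool}.
Definition spin (s : config) (i : 'I_p) : R := if s i then 1 else -1.

Definition ising_params (J : 'I_p -> 'I_p -> R) : Prop :=
  (forall u v, J u v = J v u) /\ (forall u, J u u = 0).

Definition ising_energy (J : 'I_p -> 'I_p -> R) (h : 'I_p -> R) (s : config) : R :=
  \sum_(u : 'I_p) \sum_(v : 'I_p | (u < v)%N) J u v * spin s u * spin s v
  + \sum_(u : 'I_p) h u * spin s u.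

Definition partition_fn (J : 'I_p -> 'I_p -> R) (h : 'I_p -> R) : R := \sum_(s : config) expR (ising_energy J h s).

Definition ising_mu (J : 'I_p -> 'I_p -> R) (h : 'I_p -> R) (s : config) : R := expR (ising_energy J h s) / partition_fn J h.

Definition l1_width_le (J : 'I_p -> 'I_p -> R) (h : 'I_p -> R) (gamma : R) : Prop :=
  forall u : 'I_p, \sum_(v : 'I_p | v != u) `|J u v| + `|h u| <= gamma.

Definition Rstar (J : 'I_p -> 'I_p -> R) (h : 'I_p -> R) (u : 'I_p) (theta : R) : R :=
  \sum_(s : config) ising_mu J h s *
    expR (- theta * spin s u - spin s u * \sum_(j : 'I_p | j != u) J u j * spin s j).
End Ising.

From HB Require Import structures.
From mathcomp Require Import all_boot all_order all_algebra.
From mathcomp Require Import all_classical all_reals all_analysis.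
From mathcomp Require Import ring lra.
Import Order.TTheory GRing.Theory Num.Theory.
Import numFieldNormedType.Exports.
Set Implicit Arguments. Unset Strict Implicit. Unset Printing Implicit Defensive.
Local Open Scope ring_scope.

(* R* is a mixture of the exponentials x |-> exp (k_s x + d_s) with k_s = -sigma_u = +-1,
   so its Bregman divergence at theta*_u is a mu-average of
   exp (k_s theta*_u + d_s) * phi (k_s (theta - theta*_u)) with phi x = e^x - 1 - x.
   The width bound gives exp (k_s theta*_u + d_s) >= e^-gamma and
   |theta - theta*_u| <= 2 gamma, and phi x >= x^2 / (2 + |x|) for every real x. *)

Section RealCalculus.
Variable R : realType.

Lemma is_derive_expR_affine (k d t : R) :
  is_derive t 1 (fun x => expR (k * x + d)) (k * expR (k * t + d)).
Proof.
have daff : is_derive t 1 (fun x => k * x + d) k.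
  by apply: is_derive_eq; rewrite /GRing.scale /= mulr1 addr0.
by rewrite mulrC; apply: (is_derive1_comp (f := expR)).
Qed.

Lemma is_derive_fsum (I : finType) (g : I -> R -> R) (dg : I -> R) (t : R) :
  (forall i, is_derive t 1 (g i) (dg i)) ->
  is_derive t 1 (fun x => \sum_i g i x) (\sum_i dg i).
Proof.
move=> dgi; rewrite -fct_sumE.
elim/big_ind2: _ => //; first exact: is_derive_cst.
by move=> f1 d1 f2 d2; apply: is_deriveD.
Qed.

Lemma is_derive_ge0_le (f df : R -> R) (a b : R) : a <= b ->
  (forall t : R, is_derive t 1 f (df t)) -> (forall t, a <= t <= b -> 0 <= df t) ->
  f a <= f b.
Proof.
move=> ab fdf df0.
have cf : continuous f.
  by move=> x; apply/differentiable_continuous/derivable1_diffP/ex_derive.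
have [|c cab E] := MVT_segment ab (fun x _ => fdf x).
  exact/continuous_subspaceT.
by rewrite -subr_ge0 E mulr_ge0 ?subr_ge0 // df0 //; rewrite in_itv in cab.
Qed.

Lemma sqr_le_expR_sub1Dx (x : R) : x ^+ 2 <= (2 + `|x|) * (expR x - 1 - x).
Proof.
have [x0|x0] := leP 0 x.
- pose F (t : R) := expR t - 1 - t - t * t / 2.
  have dF (t : R) : is_derive t 1 F (expR t - 1 - t).
    by apply: is_derive_eq; rewrite /GRing.scale /=; field.
  have : F 0 <= F x.
    by apply: is_derive_ge0_le dF _ => // t _; have := expR_ge1Dx t; lra.
  rewrite /F expR0 ger0_norm //; nra.
- (* (2 - x) phi x - x^2 = -2 - G x, and G is nondecreasing on ]-oo, 0]. *)
  pose G (t : R) := (t - 2) * expR t + t.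
  have dG (t : R) : is_derive t 1 G ((t - 1) * expR t + 1).
    by apply: is_derive_eq; rewrite /GRing.scale /=; ring.
  have : G x <= G 0.
    apply: is_derive_ge0_le dG _; first exact: ltW.
    move=> t /andP[_ t0]; have := expR_ge1Dx (- t); have := expRxMexpNx_1 t.
    have := expR_ge0 t; nra.
  rewrite /G expR0 ltr0_norm //; have := expR_ge1Dx x; nra.
Qed.

Lemma sqr_div_le_expR_sub1Dx (x c : R) :
  `|x| <= c -> x ^+ 2 / (2 + c) <= expR x - 1 - x.
Proof.
move=> xc; have c0 : 0 <= c := le_trans (normr_ge0 x) xc.
rewrite ler_pdivrMr; last lra.
have := sqr_le_expR_sub1Dx x; have := expR_ge1Dx x; nra.
Qed.

End RealCalculus.

Section ExpMixture.
Variables (R : realType) (I : finType) (w k d : I -> R).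

Definition expmix (x : R) : R := \sum_i w i * expR (k i * x + d i).

Lemma derive1_expmix (t : R) :
  derive1 expmix t = \sum_i w i * (k i * expR (k i * t + d i)).
Proof.
rewrite derive1E; apply: derive_val; apply: is_derive_fsum => i.
exact/is_deriveZ/is_derive_expR_affine.
Qed.

Lemma expmix_bregmanE (t y : R) :
  expmix y - expmix t - derive1 expmix t * (y - t) =
  \sum_i w i * (expR (k i * t + d i) * (expR (k i * (y - t)) - 1 - k i * (y - t))).
Proof.
rewrite derive1_expmix mulr_suml -!sumrB; apply: eq_bigr => i _.
have -> : k i * y + d i = (k i * t + d i) + k i * (y - t) by ring.
rewrite expRD; ring.
Qed.

Lemma expmix_bregman_ge (e c t y : R) :
  (forall i, 0 <= w i) -> \sum_i w i = 1 -> (forall i, `|k i| = 1) ->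
  (forall i, e <= expR (k i * t + d i)) -> `|y - t| <= c ->
  e / (2 + c) * (y - t) ^+ 2 <= expmix y - expmix t - derive1 expmix t * (y - t).
Proof.
move=> w0 w1 k1 eE yc; rewrite expmix_bregmanE.
rewrite -[X in X <= _]mul1r -{1}w1 mulr_suml; apply: ler_sum => i _.
apply: ler_wpM2l => //.
have kdelta : `|k i * (y - t)| = `|y - t| by rewrite normrM k1 mul1r.
have sqr_kdelta : (k i * (y - t)) ^+ 2 = (y - t) ^+ 2.
  by rewrite -[LHS]ger0_norm ?sqr_ge0 // normrX kdelta real_normK ?num_real.
have bound : (y - t) ^+ 2 / (2 + c) <= expR (k i * (y - t)) - 1 - k i * (y - t).
  by rewrite -sqr_kdelta; apply: sqr_div_le_expR_sub1Dx; rewrite kdelta.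
have c0 : 0 <= c := le_trans (normr_ge0 _) yc.
have q0 : 0 <= (y - t) ^+ 2 / (2 + c) by rewrite divr_ge0 ?sqr_ge0 //; lra.
rewrite mulrAC -mulrA.
exact: le_trans (ler_wpM2r q0 (eE i)) (ler_wpM2l (expR_ge0 _) bound).
Qed.

End ExpMixture.

Section IsingModel.
Variables (R : realType) (p : nat) (J : 'I_p -> 'I_p -> R) (h : 'I_p -> R).

Lemma normr_spin (s : config p) (i : 'I_p) : `|spin R s i| = 1.
Proof. by rewrite /spin; case: (s i); rewrite ?normrN normr1. Qed.

Lemma partition_fn_gt0 : 0 < partition_fn J h.
Proof.
rewrite /partition_fn (bigD1 [ffun=> true]) //= ltr_wpDr ?expR_gt0 //.
by apply: sumr_ge0 => s _; exact: expR_ge0.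
Qed.

Lemma ising_mu_ge0 (s : config p) : 0 <= ising_mu J h s.
Proof. by rewrite divr_ge0 ?expR_ge0 // ltW // partition_fn_gt0. Qed.

Lemma sum_ising_mu : \sum_s ising_mu J h s = 1.
Proof. by rewrite -mulr_suml mulfV // gt_eqF // partition_fn_gt0. Qed.

Definition local_field (u : 'I_p) (s : config p) : R :=
  \sum_(j : 'I_p | j != u) J u j * spin R s j.

Lemma Rstar_expmix (u : 'I_p) :
  Rstar J h u = expmix (ising_mu J h) (fun s => - spin R s u)
                       (fun s => - (spin R s u * local_field u s)).
Proof.
apply/funext => x; apply: eq_bigr => s _.
by congr (_ * expR _); rewrite /local_field; ring.
Qed.

Lemma expR_Nwidth_le (gamma : R) (u : 'I_p) (s : config p) :
  l1_width_le J h gamma ->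
  expR (- gamma) <= expR (- spin R s u * h u - spin R s u * local_field u s).
Proof.
move=> /(_ u) width; rewrite ler_expR.
have -> : - spin R s u * h u - spin R s u * local_field u s =
          - (spin R s u * (h u + local_field u s)) by ring.
rewrite lerN2.
apply: le_trans (ler_norm _) _; rewrite normrM normr_spin mul1r addrC.
apply: le_trans (ler_normD _ _) (le_trans _ width); rewrite lerD2r.
apply: le_trans (ler_norm_sum _ _ _) _; apply: ler_sum => j _.
by rewrite normrM normr_spin mulr1.
Qed.

End IsingModel.

Theorem mainTheorem9 (R : realType) (p : nat) (J : 'I_p -> 'I_p -> R)
  (h : 'I_p -> R) (gamma : R) (u : 'I_p) :
  ising_params J -> 0 < gamma -> l1_width_le J h gamma ->
  forall theta : R, -gamma <= theta <= gamma ->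
    Rstar J h u theta - Rstar J h u (h u)
      - (derive1 (Rstar J h u) (h u)) * (theta - h u)
    >= expR (- gamma) / (2 + 2 * gamma) * (theta - h u) ^+ 2.
Proof.
move=> _ _ width theta /andP[theta_lo theta_hi].
rewrite Rstar_expmix; apply: expmix_bregman_ge.
- exact: ising_mu_ge0.
- exact: sum_ising_mu.
- by move=> s; rewrite normrN normr_spin.
- by move=> s; exact: expR_Nwidth_le.
- have hu : `|h u| <= gamma.
    by apply: le_trans (width u); rewrite lerDr sumr_ge0.
  have theta_le : `|theta| <= gamma by rewrite ler_norml theta_lo.
  have := ler_normB theta (h u); lra.
Qed.
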